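(* Let $p$ be one of $(123,\{0\},\{0\})$, $(123,\{0\},\{0,2\})$, $(132,\{0\},\{0\})$, $(132,\{0\},\{0,2\})$, or any pattern in the same symmetry class as one of these. Then for all $n\ge1$, $a_n(p)=n!-(n-1)!+1$.
   Context: For $n\ge1$, $\mathcal S_n$ is the set of permutations $\pi=\pi_1\cdots\pi_n$ of $[n]$. A bi-vincular pattern of length $k$ is a triple $p=(\sigma,X,Y)$ with $\sigma\in\mathcal S_k$ and $X,Y\subseteq\{0,1,\dots,k\}$. A permutation $\pi\in\mathcal S_n$ contains $p$ if there are indices $1\le i_1<\dots<i_k\le n$ such that $(\pi_{i_1},\dots,\pi_{i_k})$ is order-isomorphic to $\sigma$ and, letting $j_1<\dots<j_k$ be the values $\pi_{i_1},\dots,\pi_{i_k}$ sorted increasingly and setting $i_0=j_0=0$, $i_{k+1}=j_{k+1}=n+1$, one has $i_{x+1}=i_x+1$ for all $x\in X$ and $j_{y+1}=j_y+1$ for all $y\in Y$. Otherwise $\pi$ avoids $p$; $a_n(p)$ is the number of $\pi\in\mathcal S_n$ avoiding $p$. Symmetries: $p^{i}=(\sigma^{-1},Y,X)$, $p^{r}=(\sigma^{r},\{k-x:x\in X\},Y)$, $p^{c}=(\sigma^{c},X,\{k-y:y\in Y\})$ with $\sigma^r_j=\sigma_{k+1-j}$, $\sigma^c_j=k+1-\sigma_j$; the symmetry class of $p$ consists of all patterns obtained from $p$ by finitely many applications of these maps. *)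

From mathcomp Require Import all_boot all_fingroup.
Set Implicit Arguments. Unset Strict Implicit. Unset Printing Implicit Defensive.

(* Permutations act on 0-based 'I_k; pattern value sigma_j (1-based)
   corresponds to (sigma (j-1)) + 1. *)
Record bvpat := BVPat {
  bv_k : nat;
  bv_sigma : 'S_bv_k;
  bv_X : {set 'I_bv_k.+1};
  bv_Y : {set 'I_bv_k.+1} }.

Definition idx_seq (n k : nat) (f : {ffun 'I_k -> 'I_n}) : seq nat :=
  0 :: [seq (f a).+1 | a <- enum 'I_k] ++ [:: n.+1].

Definition val_seq (n k : nat) (pi : 'S_n) (f : {ffun 'I_k -> 'I_n}) : seq nat :=
  0 :: sort leq [seq (pi (f a)).+1 | a <- enum 'I_k] ++ [:: n.+1].

Definition contains (n : nat) (pi : 'S_n) (p : bvpat) : bool :=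
  let k := bv_k p in
  [exists f : {ffun 'I_k -> 'I_n},
    [&& [forall a : 'I_k, forall b : 'I_k, (a < b) ==> (f a < f b)],
        [forall a : 'I_k, forall b : 'I_k,
           (pi (f a) < pi (f b)) == (bv_sigma p a < bv_sigma p b)],
        [forall x in bv_X p,
           nth 0 (idx_seq f) x.+1 == (nth 0 (idx_seq f) x).+1] &
        [forall y in bv_Y p,
           nth 0 (val_seq pi f) y.+1 == (nth 0 (val_seq pi f) y).+1]]].

Definition avoid_count (p : bvpat) (n : nat) : nat :=
  #|[set pi : 'S_n | ~~ contains pi p]|.

Definition rev_perm (k : nat) : 'S_k := perm (@rev_ord_inj k).

Definition pat_inv (p : bvpat) : bvpat :=
  @BVPat (bv_k p) (bv_sigma p)^-1 (bv_Y p) (bv_X p).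

(* p^r = (sigma^r, {k - x : x in X}, Y), sigma^r_j = sigma_{k+1-j} *)
Definition pat_rev (p : bvpat) : bvpat :=
  @BVPat (bv_k p) (rev_perm (bv_k p) * bv_sigma p)
         [set rev_ord x | x in bv_X p] (bv_Y p).

(* p^c = (sigma^c, X, {k - y : y in Y}), sigma^c_j = k+1-sigma_j *)
Definition pat_comp (p : bvpat) : bvpat :=
  @BVPat (bv_k p) (bv_sigma p * rev_perm (bv_k p))
         (bv_X p) [set rev_ord y | y in bv_Y p].

Inductive in_sym_class (p : bvpat) : bvpat -> Prop :=
  | sc_refl : in_sym_class p p
  | sc_inv q : in_sym_class p q -> in_sym_class p (pat_inv q)
  | sc_rev q : in_sym_class p q -> in_sym_class p (pat_rev q)
  | sc_comp q : in_sym_class p q -> in_sym_class p (pat_comp q).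

Definition perm123 : 'S_3 := 1%g.
Definition perm132 : 'S_3 := tperm (inord 1) (inord 2).
Definition set0_4 : {set 'I_4} := [set (inord 0 : 'I_4)].
Definition set02_4 : {set 'I_4} := [set (inord 0 : 'I_4); (inord 2 : 'I_4)].

Definition p1 := @BVPat 3 perm123 set0_4 set0_4.
Definition p2 := @BVPat 3 perm123 set0_4 set02_4.
Definition p3 := @BVPat 3 perm132 set0_4 set0_4.
Definition p4 := @BVPat 3 perm132 set0_4 set02_4.

From mathcomp Require Import all_boot all_fingroup zify.
Set Implicit Arguments. Unset Strict Implicit. Unset Printing Implicit Defensive.

(* The number of avoiders is invariant under inverse and reverse, hence under complement,
   which is reverse conjugated by inverse; so it suffices to count avoiders of the four
   listed patterns. In each of them X = {0} and 0 \in Y force an occurrence to start at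
   position 1 with value 1, so the n! - (n-1)! permutations with pi_1 <> 1 all avoid it.
   When pi_1 = 1, the pattern asks among the remaining entries for an ascent, a descent,
   or two consecutive values in increasing or decreasing order of position, and exactly
   one permutation fixing 1 has none: 1 n (n-1) ... 2, or the identity. *)

(** * Occurrences *)

(* The paper's i_0 = 0, i_1, ..., i_k, i_(k+1) = n + 1 for the 1-based images of g; for
   the sorted values of an occurrence it is j_0, ..., j_(k+1). *)
Definition framed_seq n k (g : 'I_k -> 'I_n) : seq nat :=
  0 :: [seq (g a).+1 | a <- enum 'I_k] ++ [:: n.+1].

Definition adjacent_on n k (S : {set 'I_k.+1}) (g : 'I_k -> 'I_n) :=
  forall x, x \in S -> nth 0 (framed_seq g) x.+1 = (nth 0 (framed_seq g) x).+1.

Lemma nth_framed_seq n k (g : 'I_k -> 'I_n) (a : 'I_k) :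
  nth 0 (framed_seq g) a.+1 = (g a).+1.
Proof.
by rewrite /= nth_cat size_map size_enum_ord ltn_ord (nth_map a) ?size_enum_ord ?nth_ord_enum.
Qed.

Section IncreasingMaps.
Variables (k n : nat) (g : 'I_k -> 'I_n).
Hypothesis g_incr : {homo g : a b / a < b}.

Lemma incr_ltE a b : (g a < g b) = (a < b).
Proof.
case: (ltngtP a b) => [/g_incr //|/g_incr /ltnW|/val_inj ->]; last exact: ltnn.
by rewrite leqNgt => /negbTE.
Qed.

Lemma sort_incr_image (s : 'S_k) :
  sort leq [seq (g (s a)).+1 | a <- enum 'I_k] = [seq (g a).+1 | a <- enum 'I_k].
Proof.
apply: (sorted_eq leq_trans anti_leq); first exact: (sort_sorted leq_total).
  have : sorted (fun a b : 'I_k => a < b) (enum 'I_k).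
    by have := iota_ltn_sorted 0 k; rewrite -val_enum_ord sorted_map.
  by apply: homo_sorted => a b /g_incr /ltnW.
rewrite perm_sort (map_comp (fun a => (g a).+1) s) perm_map //.
apply: uniq_perm; rewrite ?enum_uniq ?(map_inj_uniq (@perm_inj _ s)) ?enum_uniq //.
by move=> a; rewrite mem_enum; apply/mapP; exists (s^-1 a)%g; rewrite ?mem_enum ?permKV.
Qed.

End IncreasingMaps.

Lemma contains_occurrence n (pi : 'S_n) p : contains pi p <->
  exists g h : 'I_(bv_k p) -> 'I_n,
    [/\ {homo g : a b / a < b}, {homo h : a b / a < b},
        forall a, pi (g a) = h (bv_sigma p a),
        adjacent_on (bv_X p) g & adjacent_on (bv_Y p) h].
Proof.
case: p => k sg X Y /=.
have val_seqE (f : {ffun 'I_k -> 'I_n}) (h : 'I_k -> 'I_n) : {homo h : a b / a < b} ->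
    (forall a, pi (f a) = h (sg a)) -> val_seq pi f = framed_seq h.
  move=> h_incr fh; rewrite /val_seq /framed_seq -(sort_incr_image h_incr sg).
  by congr (_ :: sort _ _ ++ _); apply: eq_map => a; rewrite fh.
split.
- case/existsP => f /and4P [/'forall_forallP f_incr /'forall_forallP f_ord HX HY].
  set h := fun b => pi (f (sg^-1 b)%g).
  have h_incr : {homo h : a b / a < b}.
    by move=> a b ab; rewrite /h (eqP (f_ord _ _)) !permKV.
  have fh a : pi (f a) = h (sg a) by rewrite /h permK.
  exists f, h; split => // [a b ab|x Hx|x Hx].
  + exact: (implyP (f_incr a b)).
  + by apply/eqP; move/forallP: HX => /(_ x); rewrite Hx.
  + by rewrite -(val_seqE f h) //; apply/eqP; move/forallP: HY => /(_ x); rewrite Hx.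
- case=> g [h [g_incr h_incr gh HX HY]]; apply/existsP; exists [ffun a => g a].
  have idx_seqE : idx_seq [ffun a => g a] = framed_seq g.
    by rewrite /idx_seq /framed_seq; congr (_ :: _ ++ _); apply: eq_map => a; rewrite ffunE.
  apply/and4P; split.
  + by apply/'forall_forallP => a b; apply/implyP; rewrite !ffunE; apply: g_incr.
  + by apply/'forall_forallP => a b; rewrite !ffunE !gh incr_ltE.
  + by apply/forallP => x; apply/implyP => Hx; rewrite idx_seqE; apply/eqP/HX.
  + apply/forallP => x; apply/implyP => Hx.
    by rewrite (@val_seqE _ h) => [||a]; rewrite ?ffunE //; apply/eqP/HY.
Qed.

(** * Symmetries *)

Lemma avoid_count_transfer (T : bvpat -> bvpat) (phi : forall n, 'S_n -> 'S_n) :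
  involutive T -> (forall n, involutive (@phi n)) ->
  (forall n (pi : 'S_n) p, contains pi p -> contains (phi n pi) (T p)) ->
  forall p n, avoid_count (T p) n = avoid_count p n.
Proof.
move=> TK phiK phi_contains p n.
have containsE (pi : 'S_n) : contains (phi n pi) (T p) = contains pi p.
  apply/idP/idP => [/phi_contains|/phi_contains //]; by rewrite phiK TK.
have phi_inj := can_inj (phiK n).
rewrite /avoid_count -(card_imset _ phi_inj).
by apply: eq_card => pi; rewrite -[pi in LHS]phiK (mem_imset _ _ phi_inj) !inE containsE.
Qed.

Lemma pat_invK : involutive pat_inv.
Proof. by case=> k sg X Y; rewrite /pat_inv /= invgK. Qed.

Lemma contains_pat_inv n (pi : 'S_n) p : contains pi p -> contains pi^-1 (pat_inv p).
Proof.
case: p => k sg X Y /contains_occurrence /= [g [h [g_incr h_incr gh HX HY]]].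
apply/contains_occurrence; exists h, g; split => // a /=.
by rewrite -[a in LHS](permKV sg) -gh permK.
Qed.

Lemma avoid_count_inv p n : avoid_count (pat_inv p) n = avoid_count p n.
Proof.
exact: (avoid_count_transfer (phi := fun n pi => pi^-1)%g pat_invK (fun n => @invgK _)
          contains_pat_inv).
Qed.

Lemma rev_permE k (x : 'I_k) : rev_perm k x = rev_ord x.
Proof. by rewrite /rev_perm permE. Qed.

Lemma rev_perm_mulK k : involutive (fun s : 'S_k => rev_perm k * s)%g.
Proof. by move=> s; apply/permP => x; rewrite !permM !rev_permE rev_ordK. Qed.

Lemma rev_permV k : ((rev_perm k)^-1 = rev_perm k)%g.
Proof. by apply/permP => x; rewrite -[x in LHS]rev_ordK -rev_permE permK rev_permE. Qed.

Lemma rev_enum_ord k : rev (enum 'I_k) = map (@rev_ord k) (enum 'I_k).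
Proof.
apply: (inj_map val_inj); rewrite map_rev val_enum_ord -map_comp.
have -> : [seq val (rev_ord i) | i <- enum 'I_k] = [seq k - i.+1 | i <- map val (enum 'I_k)].
  by rewrite -map_comp.
rewrite val_enum_ord; apply: (@eq_from_nth _ 0); rewrite size_rev ?size_map // => i.
rewrite size_iota => ltik.
by rewrite nth_rev ?size_iota // (nth_map 0) ?size_iota // !nth_iota //; lia.
Qed.

Lemma framed_seq_rev n k (g : 'I_k -> 'I_n) :
  framed_seq (fun a => rev_ord (g (rev_ord a))) =
  map (fun v => n.+1 - v) (rev (framed_seq g)).
Proof.
rewrite /framed_seq rev_cons rev_cat map_rcons map_cat -map_rev rev_enum_ord -map_comp.
rewrite /= subnn subn0 -cats1 -map_comp; congr (_ :: _ ++ _); apply: eq_map => a /=.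
by have := ltn_ord (g (rev_ord a)); lia.
Qed.

Lemma adjacent_on_rev n k (X : {set 'I_k.+1}) (g : 'I_k -> 'I_n) : adjacent_on X g ->
  adjacent_on [set rev_ord x | x in X] (fun a => rev_ord (g (rev_ord a))).
Proof.
move=> HX _ /imsetP [x /HX gap_x ->]; rewrite framed_seq_rev /=.
have size_framed : size (framed_seq g) = k.+2.
  by rewrite /framed_seq /= size_cat size_map size_enum_ord addn1.
have framed_le i : nth 0 (framed_seq g) i <= n.+1.
  case: (ltnP i (size (framed_seq g))) => [/(mem_nth 0)|?]; last by rewrite nth_default.
  rewrite in_cons mem_cat inE => /or3P [/eqP -> //|/mapP [a _ ->]|/eqP -> //].
  by rewrite ltnS ltnW.
have lt_xk := ltn_ord x.
rewrite !(nth_map 0) ?size_rev ?size_framed ?nth_rev ?size_framed; try lia.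
have -> : k.+2 - (k.+1 - x.+1).+2 = x by lia.
have -> : k.+2 - (k.+1 - x.+1).+1 = x.+1 by lia.
by move: (framed_le x.+1); rewrite gap_x; lia.
Qed.

Lemma pat_revK : involutive pat_rev.
Proof.
case=> k sg X Y; rewrite /pat_rev /= rev_perm_mulK.
by congr BVPat; apply/setP => x; rewrite -[x in LHS]rev_ordK !(mem_imset _ _ rev_ord_inj).
Qed.

Lemma contains_pat_rev n (pi : 'S_n) p :
  contains pi p -> contains (rev_perm n * pi)%g (pat_rev p).
Proof.
case: p => k sg X Y /contains_occurrence /= [g [h [g_incr h_incr gh HX HY]]].
apply/contains_occurrence; exists (fun a => rev_ord (g (rev_ord a))), h; split => //=.
- move=> a b ab; have /g_incr : rev_ord b < rev_ord a by rewrite /=; have := ltn_ord b; lia.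
  by have := ltn_ord (g (rev_ord a)); rewrite /=; lia.
- by move=> a; rewrite !permM !rev_permE rev_ordK gh.
- exact: adjacent_on_rev.
Qed.

Lemma avoid_count_rev p n : avoid_count (pat_rev p) n = avoid_count p n.
Proof.
exact: (avoid_count_transfer pat_revK (fun n => @rev_perm_mulK n) contains_pat_rev).
Qed.

Lemma pat_compE p : pat_comp p = pat_inv (pat_rev (pat_inv p)).
Proof.
by case: p => k sg X Y; rewrite /pat_comp /pat_inv /pat_rev /= invMg invgK rev_permV.
Qed.

Lemma avoid_count_sym_class p q n :
  in_sym_class p q -> avoid_count q n = avoid_count p n.
Proof.
elim=> [//|{}q _ IH|{}q _ IH|{}q _ IH].
- by rewrite avoid_count_inv.
- by rewrite avoid_count_rev.
- by rewrite pat_compE avoid_count_inv avoid_count_rev avoid_count_inv.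
Qed.

(** * Permutations fixing the first entry *)

Lemma perm_incr_eq1 n (s : 'S_n) : {homo s : i j / i < j} -> s = 1%g.
Proof.
move=> s_incr; have enum_sorted : sorted (fun i j : 'I_n => i < j) (enum 'I_n).
  by have := iota_ltn_sorted 0 n; rewrite -val_enum_ord sorted_map.
have : map s (enum 'I_n) = map id (enum 'I_n).
  rewrite map_id; apply: (irr_sorted_eq (leT := fun i j : 'I_n => i < j)).
  - by move=> j i k; apply: ltn_trans.
  - by move=> i; rewrite /= ltnn.
  - exact: homo_sorted s_incr _ enum_sorted.
  - exact: enum_sorted.
  - by move=> i; rewrite mem_enum; apply/mapP; exists (s^-1 i)%g; rewrite ?mem_enum ?permKV.
by move/eq_in_map => s_id; apply/permP => i; rewrite perm1 s_id ?mem_enum.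
Qed.

Section PermFixingZero.
Variable m : nat.

Lemma perm_fix0_pos (s : 'S_m.+1) i : s ord0 = ord0 -> (0 < s i) = (0 < i).
Proof.
move=> s0; rewrite !lt0n; have := inj_eq (@perm_inj _ s) i ord0.
by rewrite s0; apply: congr1.
Qed.

Lemma perm_fix0_adj_incr (s : 'S_m.+1) : s ord0 = ord0 ->
  (forall i, 0 < i < m -> s (inord i) < s (inord i.+1)) -> s = 1%g.
Proof.
move=> s0 s_adj; apply: perm_incr_eq1 => i j.
have inord0 : inord 0 = ord0 :> 'I_m.+1 by apply: val_inj; rewrite /= inordK.
have adj k : k < m -> s (inord k) < s (inord k.+1).
  case: k => [m0|k km]; last by apply: s_adj.
  by rewrite inord0 s0 /= perm_fix0_pos // inordK.
have s_incr : {in [pred k | k <= m] &,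
                {homo (fun k => s (inord k) : nat) : a b / a < b}}.
  apply: homo_ltn_in => [a b c|a b _ bD c /andP [_ /ltnW cb]|a _]; first exact: ltn_trans.
    by rewrite inE (leq_trans cb).
  by rewrite inE => /adj.
by move=> ij; have := s_incr i j; rewrite !inord_val; apply=> //; rewrite inE -ltnS.
Qed.

Lemma perm_inord_neq (s : 'S_m.+1) i :
  i < m -> s (inord i) != s (inord i.+1) :> nat.
Proof.
by move=> im; rewrite val_eqE (inj_eq perm_inj) -val_eqE /= !inordK ?ltn_eqF // ltnS ltnW.
Qed.

(* In 1-based one-line notation: 1 n (n-1) ... 2. *)
Definition rev_tail_perm : 'S_m.+1 := lift_perm ord0 ord0 (rev_perm m).

Lemma rev_tail_perm0 : rev_tail_perm ord0 = ord0.
Proof. exact: lift_perm_id. Qed.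

Lemma rev_tail_permV : (rev_tail_perm^-1 = rev_tail_perm)%g.
Proof. by rewrite lift_permV rev_permV. Qed.

Lemma rev_tail_perm_decr (x y : 'I_m.+1) : 0 < x -> x < y ->
  rev_tail_perm y < rev_tail_perm x.
Proof.
case: (unliftP ord0 x) => [k -> _|-> //]; case: (unliftP ord0 y) => [l -> |-> //].
rewrite /rev_tail_perm !lift_perm_lift !lift0 !rev_permE /= !ltnS => kl.
by have : @nat_of_ord m l < m := ltn_ord l; lia.
Qed.

Lemma perm_fix0_adj_decr (s : 'S_m.+1) : s ord0 = ord0 ->
  (forall i, 0 < i < m -> s (inord i.+1) < s (inord i)) -> s = rev_tail_perm.
Proof.
(* Composing with rev_tail_perm turns the descents of s into ascents. *)
move=> s0 s_adj; apply: (mulIg rev_tail_perm); rewrite -{3}rev_tail_permV mulgV.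
apply: perm_fix0_adj_incr => [|i i_range]; first by rewrite permM s0 rev_tail_perm0.
rewrite !permM; apply: rev_tail_perm_decr (s_adj _ i_range).
by case/andP: i_range => i0 im; rewrite perm_fix0_pos // inordK // ltnS ltnW.
Qed.

End PermFixingZero.

(** * Patterns whose occurrences start at (1, 1) *)

Definition o0 : 'I_3 := @Ordinal 3 0 isT.
Definition o1 : 'I_3 := @Ordinal 3 1 isT.
Definition o2 : 'I_3 := @Ordinal 3 2 isT.

Lemma ord3P (P : 'I_3 -> Prop) : P o0 -> P o1 -> P o2 -> forall a, P a.
Proof. by move=> P0 P1 P2 [[|[|[|]]] a3] //; rewrite (bool_irrelevance a3 isT). Qed.

Lemma perm132E : [/\ perm132 o0 = o0, perm132 o1 = o2 & perm132 o2 = o1].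
Proof.
rewrite /perm132; have -> : inord 1 = o1 by apply: val_inj; rewrite /= inordK.
have -> : inord 2 = o2 by apply: val_inj; rewrite /= inordK.
by rewrite tpermL tpermR tpermD.
Qed.

Definition triple n (a b c : 'I_n) (x : 'I_3) : 'I_n :=
  match val x with 0 => a | 1 => b | _ => c end.

Lemma triple_incr n (a b c : 'I_n) :
  a < b -> b < c -> {homo triple a b c : x y / x < y}.
Proof. by move=> ab bc; apply: ord3P; apply: ord3P => //= _; apply: ltn_trans bc. Qed.

Lemma adjacent_on_set0 n (g : 'I_3 -> 'I_n) : adjacent_on set0_4 g <-> g o0 = 0 :> nat.
Proof.
have g0E : nth 0 (framed_seq g) 1 = (g o0).+1 by exact: (nth_framed_seq g o0).
split => [/(_ (inord 0)) | g0 _ /set1P ->]; rewrite inordK // g0E.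
  by rewrite set11 => /(_ isT) [].
by rewrite g0.
Qed.

Lemma adjacent_on_set02 n (g : 'I_3 -> 'I_n) :
  adjacent_on set02_4 g <-> g o0 = 0 :> nat /\ g o2 = (g o1).+1 :> nat.
Proof.
have g0E : nth 0 (framed_seq g) 1 = (g o0).+1 by exact: (nth_framed_seq g o0).
have g1E : nth 0 (framed_seq g) 2 = (g o1).+1 by exact: (nth_framed_seq g o1).
have g2E : nth 0 (framed_seq g) 3 = (g o2).+1 by exact: (nth_framed_seq g o2).
split => [adj | [g0 g2] _ /set2P [] ->]; rewrite ?inordK ?g0E ?g1E ?g2E ?g0 ?g2 //.
have := adj (inord 0); have := adj (inord 2); rewrite !inordK ?g0E ?g1E ?g2E //.
by rewrite !inE !eqxx orbT => /(_ isT) [] -> /(_ isT) [].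
Qed.

Section FirstEntryFixed.
Variables (m : nat) (pi : 'S_m.+1).

(* Q is what Y demands of the two upper values beyond j_1 = 1. *)
Lemma contains_123_first Y (Q : nat -> nat -> Prop) :
  (forall h : 'I_3 -> 'I_m.+1, adjacent_on Y h <-> h o0 = 0 :> nat /\ Q (h o1) (h o2)) ->
  contains pi (BVPat perm123 set0_4 Y) <->
  pi ord0 = ord0 /\ exists i j : 'I_m.+1, [/\ 0 < i, i < j, pi i < pi j & Q (pi i) (pi j)].
Proof.
move=> adjY; rewrite contains_occurrence /=; split.
- case=> g [h [g_incr h_incr gh /adjacent_on_set0 g0 /adjY [h0 Qh]]].
  have ghE a : pi (g a) = h a by rewrite gh /perm123 perm1.
  have g0E : g o0 = ord0 by exact: val_inj.
  have h0E : h o0 = ord0 by exact: val_inj.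
  split; first by rewrite -g0E ghE h0E.
  exists (g o1), (g o2); rewrite !ghE; split => //; last by apply: h_incr.
  + by rewrite -g0; apply: g_incr.
  + exact: g_incr.
- case=> pi0 [i [j [i0 ij piij Qij]]].
  exists (triple ord0 i j), (triple ord0 (pi i) (pi j)); split.
  + exact: triple_incr.
  + by apply: triple_incr; rewrite // perm_fix0_pos.
  + by apply: ord3P; rewrite /perm123 perm1.
  + exact/adjacent_on_set0.
  + exact/adjY.
Qed.

Lemma contains_132_first Y (Q : nat -> nat -> Prop) :
  (forall h : 'I_3 -> 'I_m.+1, adjacent_on Y h <-> h o0 = 0 :> nat /\ Q (h o1) (h o2)) ->
  contains pi (BVPat perm132 set0_4 Y) <->
  pi ord0 = ord0 /\ exists i j : 'I_m.+1, [/\ 0 < i, i < j, pi j < pi i & Q (pi j) (pi i)].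
Proof.
have [sg0 sg1 sg2] := perm132E.
move=> adjY; rewrite contains_occurrence /=; split.
- case=> g [h [g_incr h_incr gh /adjacent_on_set0 g0 /adjY [h0 Qh]]].
  have g0E : g o0 = ord0 by exact: val_inj.
  have h0E : h o0 = ord0 by exact: val_inj.
  split; first by rewrite -g0E gh sg0 h0E.
  exists (g o1), (g o2); rewrite !gh sg1 sg2; split => //; last by apply: h_incr.
  + by rewrite -g0; apply: g_incr.
  + exact: g_incr.
- case=> pi0 [i [j [i0 ij piji Qji]]].
  exists (triple ord0 i j), (triple ord0 (pi j) (pi i)); split.
  + exact: triple_incr.
  + by apply: triple_incr; rewrite // perm_fix0_pos // (ltn_trans i0).
  + by apply: ord3P; rewrite ?sg0 ?sg1 ?sg2.
  + exact/adjacent_on_set0.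
  + exact/adjY.
Qed.

Lemma contains_p1 :
  contains pi p1 <-> pi ord0 = ord0 /\ exists i j : 'I_m.+1, [/\ 0 < i, i < j & pi i < pi j].
Proof.
apply: iff_trans (contains_123_first (Q := fun _ _ => True) _) _.
  by move=> h; apply: iff_trans (adjacent_on_set0 h) _; split=> [|[]].
by split=> [] [pi0 [i [j [*]]]]; split=> //; exists i, j.
Qed.

Lemma contains_p3 :
  contains pi p3 <-> pi ord0 = ord0 /\ exists i j : 'I_m.+1, [/\ 0 < i, i < j & pi j < pi i].
Proof.
apply: iff_trans (contains_132_first (Q := fun _ _ => True) _) _.
  by move=> h; apply: iff_trans (adjacent_on_set0 h) _; split=> [|[]].
by split=> [] [pi0 [i [j [*]]]]; split=> //; exists i, j.
Qed.

Lemma contains_p2 : contains pi p2 <->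
  pi ord0 = ord0 /\ exists i j : 'I_m.+1, [/\ 0 < i, i < j & pi j = (pi i).+1 :> nat].
Proof.
apply: iff_trans (contains_123_first (Q := fun u v => v = u.+1) (@adjacent_on_set02 _)) _.
split=> [] [pi0 [i [j [i0 ij]]]]; last move=> piij.
  by move=> _ piij; split=> //; exists i, j.
by split=> //; exists i, j; rewrite piij.
Qed.

Lemma contains_p4 : contains pi p4 <->
  pi ord0 = ord0 /\ exists i j : 'I_m.+1, [/\ 0 < i, i < j & pi i = (pi j).+1 :> nat].
Proof.
apply: iff_trans (contains_132_first (Q := fun u v => v = u.+1) (@adjacent_on_set02 _)) _.
split=> [] [pi0 [i [j [i0 ij]]]]; last move=> piij.
  by move=> _ piij; split=> //; exists i, j.
by split=> //; exists i, j; rewrite piij.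
Qed.

End FirstEntryFixed.

(** * Counting *)

Lemma card_perm_move0 m : #|[set pi : 'S_m.+1 | pi ord0 != ord0]| = m.+1`! - m`!.
Proof.
have card_fix0 : #|[set pi : 'S_m.+1 | pi ord0 == ord0]| = m`!.
  have -> : m`! = #|[set~ @ord0 m]|`! by rewrite cardsC1 card_ord.
  rewrite -card_perm; apply: eq_card => pi; rewrite !inE.
  apply/eqP/subsetP => [pi0 x|pi_on]; first by rewrite !inE; apply: contra_neq => ->.
  by apply/eqP; apply: contraT => /pi_on; rewrite !inE eqxx.
have := cardsC [set pi : 'S_m.+1 | pi ord0 == ord0]; rewrite card_fix0 card_Sn => <-.
have -> : ~: [set pi : 'S_m.+1 | pi ord0 == ord0] = [set pi : 'S_m.+1 | pi ord0 != ord0].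
  by apply/setP => pi; rewrite !inE.
by rewrite addKn.
Qed.

Lemma avoid_count_unique_fix0 m p (c : 'S_m.+1) :
  (forall pi : 'S_m.+1, contains pi p -> pi ord0 = ord0) ->
  c ord0 = ord0 -> ~~ contains c p ->
  (forall pi : 'S_m.+1, pi ord0 = ord0 -> ~~ contains pi p -> pi = c) ->
  avoid_count p m.+1 = m.+1`! - m`! + 1.
Proof.
move=> contains_fix0 c0 c_avoids unique_c; rewrite /avoid_count.
have -> : [set pi | ~~ contains pi p] = c |: [set pi : 'S_m.+1 | pi ord0 != ord0].
  apply/setP => pi; rewrite !inE; have [pi0|pi_moves0] := eqVneq (pi ord0) ord0.
    by rewrite orbF; apply/idP/eqP => [/(unique_c _ pi0) | ->].
  by rewrite orbT; apply: contraNN pi_moves0 => /contains_fix0 ->.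
by rewrite cardsU1 inE c0 eqxx card_perm_move0 addnC.
Qed.

Lemma avoid_count_p1 m : avoid_count p1 m.+1 = m.+1`! - m`! + 1.
Proof.
apply: (@avoid_count_unique_fix0 _ _ (rev_tail_perm m))
  => [pi /contains_p1 [] //|||pi pi0 pi_avoids].
- exact: rev_tail_perm0.
- apply/negP => /contains_p1 [_ [i [j [i0 ij]]]].
  by rewrite ltnNge ltnW // rev_tail_perm_decr.
apply: perm_fix0_adj_decr => // i /andP [i0 im].
have := perm_inord_neq pi im; rewrite neq_ltn => /orP [lt_i|//].
case/negP: pi_avoids; apply/contains_p1; split=> //.
by exists (inord i), (inord i.+1); rewrite !inordK // ltnS ltnW.
Qed.

Lemma avoid_count_p3 m : avoid_count p3 m.+1 = m.+1`! - m`! + 1.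
Proof.
apply: (@avoid_count_unique_fix0 _ _ 1%g) => [pi /contains_p3 [] //|||pi pi0 pi_avoids].
- exact: perm1.
- by apply/negP => /contains_p3 [_ [i [j [_ ij]]]]; rewrite !perm1 ltnNge ltnW.
apply: perm_fix0_adj_incr => // i /andP [i0 im].
have := perm_inord_neq pi im; rewrite neq_ltn => /orP [//|lt_i].
case/negP: pi_avoids; apply/contains_p3; split=> //.
by exists (inord i), (inord i.+1); rewrite !inordK // ltnS ltnW.
Qed.

Lemma avoid_count_p2 m : avoid_count p2 m.+1 = m.+1`! - m`! + 1.
Proof.
apply: (@avoid_count_unique_fix0 _ _ (rev_tail_perm m))
  => [pi /contains_p2 [] //|||pi pi0 pi_avoids].
- exact: rev_tail_perm0.
- apply/negP => /contains_p2 [_ [i [j [i0 ij cij]]]].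
  by have := rev_tail_perm_decr i0 ij; rewrite cij ltnNge leqnSn.
(* Avoiding p2 makes v + 1 occur before v for 0 < v < m, so pi^-1 has only descents. *)
suff piV : (pi^-1 = rev_tail_perm m)%g by rewrite -[pi]invgK piV rev_tail_permV.
have piV0 : (pi^-1)%g ord0 = ord0 by rewrite -{1}pi0 permK.
apply: perm_fix0_adj_decr => // v /andP [v0 vm].
have := perm_inord_neq pi^-1 vm; rewrite neq_ltn => /orP [lt_v|//].
case/negP: pi_avoids; apply/contains_p2; split=> //.
exists ((pi^-1)%g (inord v)), ((pi^-1)%g (inord v.+1)).
by rewrite !permKV perm_fix0_pos // !inordK // ltnS ltnW.
Qed.

Lemma avoid_count_p4 m : avoid_count p4 m.+1 = m.+1`! - m`! + 1.
Proof.
apply: (@avoid_count_unique_fix0 _ _ 1%g) => [pi /contains_p4 [] //|||pi pi0 pi_avoids].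
- exact: perm1.
- apply/negP => /contains_p4 [_ [i [j [_ ij]]]]; rewrite !perm1 => ji.
  by move: ij; rewrite ji ltnNge leqnSn.
(* Avoiding p4 makes v + 1 occur after v for 0 < v < m, so pi^-1 has only ascents. *)
suff piV : (pi^-1 = 1)%g by rewrite -[pi]invgK piV invg1.
have piV0 : (pi^-1)%g ord0 = ord0 by rewrite -{1}pi0 permK.
apply: perm_fix0_adj_incr => // v /andP [v0 vm].
have := perm_inord_neq pi^-1 vm; rewrite neq_ltn => /orP [//|lt_v].
case/negP: pi_avoids; apply/contains_p4; split=> //.
exists ((pi^-1)%g (inord v.+1)), ((pi^-1)%g (inord v)).
by rewrite !permKV perm_fix0_pos // !inordK // ltnS ltnW.
Qed.

Theorem mainTheorem14 (p : bvpat) :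
  (in_sym_class p1 p \/ in_sym_class p2 p \/ in_sym_class p3 p \/ in_sym_class p4 p) ->
  forall n : nat, 1 <= n -> avoid_count p n = n`! - n.-1`! + 1.
Proof.
move=> sym [//|m] _ /=.
case: sym => [|[|[|]]] /avoid_count_sym_class ->.
- exact: avoid_count_p1.
- exact: avoid_count_p2.
- exact: avoid_count_p3.
- exact: avoid_count_p4.
Qed.
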